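(* Let $G$ be a graph, $t\in\mathbb N$, and let $I_t=I_t^{(\mathcal P)}(G)$ for $\mathcal P\in\{push,pull,pp\}$. Then $$\mathrm{Var}\big[|I_{t+1}|\,\big|\,I_t\big]\le\mathbb E\big[|I_{t+1}|\,\big|\,I_t\big].$$
   Context: Rumour spreading protocols on a graph $G$, synchronous rounds, each message transmission succeeding independently with probability $q\in(0,1]$. push: every informed vertex chooses a neighbour independently and uniformly at random (iuar) and informs it (if the transmission succeeds). pull: every uninformed vertex chooses a neighbour iuar; if it is informed and transmission succeeds, the asking vertex becomes informed. push\&pull (pp): every vertex chooses a neighbour iuar; if one of the two is informed (and the transmission succeeds) both become informed. $I_t^{(\mathcal P)}(G)$ denotes the set of vertices informed at the beginning of round $t$ under protocol $\mathcal P$. *)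

From mathcomp Require Import all_boot all_order all_algebra.
Unset Implicit Arguments. Unset Printing Implicit Defensive.
Import Order.TTheory GRing.Theory Num.Theory.
Local Open Scope ring_scope.

Inductive protocol := Push | Pull | PushPull.

Section Round.
Variables (R : realFieldType) (V : finType) (adj : rel V) (q : R).

Definition nbhd (v : V) : {set V} := [set u | adj v u].

(* Outcome of one round: every vertex v picks a contact (c v), and each
   vertex's message transmission (the one associated with its call) succeeds
   iff b v.  Isolated vertices (no neighbours) "pick" themselves, which has
   no effect. *)
Definition outcome := ({ffun V -> V} * {ffun V -> bool})%type.

Definition pick_prob (v u : V) : R :=
  if #|nbhd v| == 0%N then (u == v)%:R
  else (u \in nbhd v)%:R / (#|nbhd v|)%:R.

Definition succ_prob (b : bool) : R := if b then q else 1 - q.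

Definition weight (w : outcome) : R :=
  \prod_(v : V) (pick_prob v (w.1 v) * succ_prob (w.2 v)).

Definition next_informed (P : protocol) (S : {set V}) (w : outcome) : {set V} :=
  let c := w.1 in let b := w.2 in
  match P with
  | Push => S :|: [set u | [exists v in S, [&& adj v u, c v == u & b v]]]
  | Pull => S :|: [set u | [&& adj u (c u), c u \in S & b u]]
  | PushPull => S :|: [set u | [&& adj u (c u), c u \in S & b u]
                        || [exists v in S, [&& adj v u, c v == u & b v]]]
  end.

Definition next_count (P : protocol) (S : {set V}) (w : outcome) : R :=
  (#|next_informed P S w|)%:R.

Definition Exp (X : outcome -> R) : R := \sum_(w : outcome) weight w * X w.
Definition Var (X : outcome -> R) : R :=
  \sum_(w : outcome) weight w * (X w - Exp X) ^+ 2.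

End Round.

From mathcomp Require Import all_boot all_order all_algebra ring.
Import Order.TTheory GRing.Theory Num.Theory.
Local Open Scope ring_scope.

(* Write |I_{t+1}| as the sum of the indicators Z_u of the events "u is
   informed"; since Z_u^2 = Z_u, it suffices that distinct indicators are
   negatively correlated.  For u outside the informed set S, 1 - Z_u is the
   product over all vertices v of the indicators "the call of v does not
   inform u", and these factors are independent across v.  A single call
   informs at most one uninformed vertex, so for u <> u' the events "the call
   of v informs u" and "the call of v informs u'" are disjoint, and disjoint
   events have negatively correlated complements. *)

Section OneRound.
Variables (R : realFieldType) (V : finType) (adj : rel V) (q : R).

Local Notation outcome := (outcome V).
Local Notation E := (Exp R V adj q).

Definition Cov (X Y : outcome -> R) : R := E (fun w => X w * Y w) - E X * E Y.

Lemma eq_Exp (X Y : outcome -> R) : X =1 Y -> E X = E Y.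
Proof. by move=> eqXY; apply: eq_bigr => w _; rewrite eqXY. Qed.
Arguments eq_Exp {X Y}.

Lemma eq_Cov (X X' Y Y' : outcome -> R) :
  X =1 X' -> Y =1 Y' -> Cov X Y = Cov X' Y'.
Proof.
move=> eqX eqY; rewrite /Cov (eq_Exp eqX) (eq_Exp eqY).
by congr (_ - _); apply: eq_Exp => w; rewrite eqX eqY.
Qed.
Arguments eq_Cov {X X' Y Y'}.

Lemma ExpB (X Y : outcome -> R) : E (fun w => X w - Y w) = E X - E Y.
Proof. by rewrite /Exp -sumrB; apply: eq_bigr => w _; rewrite mulrBr. Qed.

Lemma ExpZ (c : R) (X : outcome -> R) : E (fun w => c * X w) = c * E X.
Proof. by rewrite /Exp mulr_sumr; apply: eq_bigr => w _; rewrite mulrCA. Qed.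

Lemma Exp_sum (I : finType) (X : I -> outcome -> R) :
  E (fun w => \sum_i X i w) = \sum_i E (X i).
Proof. by rewrite /Exp; under eq_bigr do rewrite mulr_sumr; exact: exchange_big. Qed.

Lemma natr_card (T : finType) (A : {set T}) : #|A|%:R = \sum_t (t \in A)%:R :> R.
Proof.
by rewrite -sum1_card natr_sum big_mkcond; apply: eq_bigr => t _; case: (t \in A).
Qed.

Lemma natr_exists (T : finType) (A : pred T) :
  [exists t, A t]%:R = 1 - \prod_t (~~ A t)%:R :> R.
Proof.
case: (boolP [exists t, A t]) => [/existsP [t At] | /existsPn nA].
  by rewrite (bigD1 t) //= At mul0r subr0.
by rewrite big1 ?subrr // => t _; rewrite nA.
Qed.

Definition call_prob (v : V) (x : V * bool) : R :=
  pick_prob R V adj v x.1 * succ_prob R q x.2.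

Lemma sum_pick_prob (v : V) : \sum_u pick_prob R V adj v u = 1.
Proof.
rewrite /pick_prob; case: eqP => [_ | /eqP nbhd_neq0].
  by rewrite (bigD1 v) //= eqxx big1 ?addr0 // => u /negPf ->.
by rewrite -mulr_suml -natr_card divff ?pnatr_eq0.
Qed.

Lemma sum_call_prob (v : V) : \sum_x call_prob v x = 1.
Proof.
rewrite -(pair_bigA _ (fun a b => call_prob v (a, b))) -[RHS](sum_pick_prob v).
apply: eq_bigr => a _; rewrite /call_prob /=.
by rewrite -mulr_sumr big_bool /= addrC subrK mulr1.
Qed.

(* The coordinates of an outcome are independent, with laws [call_prob v]. *)
Lemma Exp_prod (h : V -> V * bool -> R) :
  E (fun w => \prod_v h v (w.1 v, w.2 v)) = \prod_v \sum_x call_prob v x * h v x.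
Proof.
rewrite /Exp /weight -(pair_bigA _ (fun (f : {ffun V -> V}) (g : {ffun V -> bool}) =>
  \prod_v (pick_prob R V adj v (f v) * succ_prob R q (g v)) * \prod_v h v (f v, g v))) /=.
under eq_bigr do under eq_bigr do rewrite -big_split /=.
under eq_bigr => f _ do rewrite -(bigA_distr_bigA (fun v b =>
  pick_prob R V adj v (f v) * succ_prob R q b * h v (f v, b))).
rewrite -(bigA_distr_bigA (fun v a => \sum_b
  pick_prob R V adj v a * succ_prob R q b * h v (a, b))).
by apply: eq_bigr => v _; rewrite pair_bigA; apply: eq_bigr => -[a b].
Qed.

Lemma Exp_cst (c : R) : E (fun=> c) = c.
Proof.
have sum_weight : \sum_w weight R V adj q w = 1.
  transitivity (\prod_v \sum_x call_prob v x * 1).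
    by rewrite -Exp_prod; apply: eq_bigr => w _; rewrite big1_eq mulr1.
  by rewrite big1 // => v _; under eq_bigr do rewrite mulr1; exact: sum_call_prob.
by rewrite /Exp -mulr_suml sum_weight mul1r.
Qed.

Lemma Var_Cov (X : outcome -> R) : Var R V adj q X = Cov X X.
Proof.
pose m := E X; rewrite /Var.
have -> : \sum_w weight R V adj q w * (X w - m) ^+ 2 =
    E (fun w => X w * X w - (m *+ 2 * X w - m ^+ 2)).
  by apply: eq_bigr => w _; congr (_ * _); ring.
by rewrite /Cov ExpB ExpB ExpZ Exp_cst -/m; ring.
Qed.

Lemma CovC (X Y : outcome -> R) : Cov X Y = Cov Y X.
Proof.
by rewrite /Cov mulrC; congr (_ - _); apply: eq_Exp => w; rewrite mulrC.
Qed.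

Lemma Cov_cstl (c : R) (Y : outcome -> R) : Cov (fun=> c) Y = 0.
Proof. by rewrite /Cov ExpZ Exp_cst subrr. Qed.

Lemma Cov_cstr (c : R) (X : outcome -> R) : Cov X (fun=> c) = 0.
Proof. by rewrite CovC Cov_cstl. Qed.

Lemma Cov_compl (X Y : outcome -> R) :
  Cov (fun w => 1 - X w) (fun w => 1 - Y w) = Cov X Y.
Proof.
rewrite /Cov (eq_Exp (_ : _ =1 fun w => (1 - X w) - (Y w - X w * Y w))); last first.
  by move=> w; ring.
by rewrite !ExpB Exp_cst; ring.
Qed.

Lemma Cov_suml (I : finType) (X : I -> outcome -> R) (Y : outcome -> R) :
  Cov (fun w => \sum_i X i w) Y = \sum_i Cov (X i) Y.
Proof.
rewrite /Cov sumrB Exp_sum mulr_suml -Exp_sum.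
by congr (_ - _); apply: eq_Exp => w; rewrite mulr_suml.
Qed.

Lemma Cov_sumr (I : finType) (X : outcome -> R) (Y : I -> outcome -> R) :
  Cov X (fun w => \sum_i Y i w) = \sum_i Cov X (Y i).
Proof.
by rewrite CovC Cov_suml; apply: eq_bigr => i _; rewrite CovC.
Qed.

Lemma Cov_indicator_le_Exp (A : outcome -> bool) :
  Cov (fun w => (A w)%:R) (fun w => (A w)%:R) <= E (fun w => (A w)%:R).
Proof.
have sqA : (fun w => (A w)%:R * (A w)%:R) =1 (fun w => (A w)%:R :> R).
  by move=> w; case: (A w); rewrite ?mulr1 ?mulr0.
by rewrite /Cov (eq_Exp sqA) lerBlDr lerDl -expr2 sqr_ge0.
Qed.

Lemma Var_le_Exp_sum_indicators (I : finType) (A : I -> outcome -> bool)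
    (X : outcome -> R) :
  (forall w, X w = \sum_i (A i w)%:R) ->
  (forall i j, i != j -> Cov (fun w => (A i w)%:R) (fun w => (A j w)%:R) <= 0) ->
  Var R V adj q X <= E X.
Proof.
move=> eqX cov_le0; rewrite Var_Cov (eq_Cov eqX eqX) (eq_Exp eqX) Cov_suml Exp_sum.
apply: ler_sum => i _; rewrite Cov_sumr (bigD1 i) //= -[leRHS]addr0.
apply: lerD; first exact: Cov_indicator_le_Exp.
by apply: sumr_le0 => j; rewrite eq_sym; exact: cov_le0.
Qed.

Lemma disjoint_compl_neg_corr (T : finType) (pi : T -> R) (F G : pred T) :
  (forall t, 0 <= pi t) -> \sum_t pi t = 1 -> (forall t, ~~ (F t && G t)) ->
  0 <= \sum_t pi t * ((~~ F t)%:R * (~~ G t)%:R)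
    <= (\sum_t pi t * (~~ F t)%:R) * (\sum_t pi t * (~~ G t)%:R).
Proof.
move=> pi_ge0 sum_pi disjFG; pose pr (A : pred T) := \sum_t pi t * (A t)%:R.
have pr_ge0 A : 0 <= pr A by apply: sumr_ge0 => t _; rewrite mulr_ge0 ?ler0n.
have pr_compl A : \sum_t pi t * (~~ A t)%:R = 1 - pr A.
  rewrite -[X in X - _]sum_pi -sumrB; apply: eq_bigr => t _.
  by case: (A t) => /=; ring.
have pr_compl2 : \sum_t pi t * ((~~ F t)%:R * (~~ G t)%:R) = 1 - pr F - pr G.
  rewrite -[X in X - _ - _]sum_pi -!sumrB; apply: eq_bigr => t _.
  by move: (disjFG t); case: (F t); case: (G t) => //= _; ring.
apply/andP; split.
  by apply: sumr_ge0 => t _; rewrite !mulr_ge0 ?ler0n.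
rewrite pr_compl2 !pr_compl -subr_ge0.
have -> : (1 - pr F) * (1 - pr G) - (1 - pr F - pr G) = pr F * pr G by ring.
exact: mulr_ge0.
Qed.

Hypotheses (q_ge0 : 0 <= q) (q_le1 : q <= 1).

Lemma call_prob_ge0 (v : V) (x : V * bool) : 0 <= call_prob v x.
Proof.
rewrite /call_prob mulr_ge0 //; last by case: x.2; rewrite /= ?subr_ge0.
by rewrite /pick_prob; case: ifP; rewrite ?divr_ge0 ?ler0n.
Qed.

Lemma disjoint_calls_Cov_le0 (F G : V -> V * bool -> bool) :
  (forall v x, ~~ (F v x && G v x)) ->
  Cov (fun w => \prod_v (~~ F v (w.1 v, w.2 v))%:R)
      (fun w => \prod_v (~~ G v (w.1 v, w.2 v))%:R) <= 0.
Proof.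
move=> disjFG; rewrite /Cov subr_le0.
have prod_split : (fun w : outcome => \prod_v (~~ F v (w.1 v, w.2 v))%:R *
                                     \prod_v (~~ G v (w.1 v, w.2 v))%:R) =1
    (fun w => \prod_v ((~~ F v (w.1 v, w.2 v))%:R * (~~ G v (w.1 v, w.2 v))%:R) :> R).
  by move=> w; rewrite big_split.
rewrite (eq_Exp prod_split).
rewrite (Exp_prod (fun v x => (~~ F v x)%:R * (~~ G v x)%:R)).
rewrite (Exp_prod (fun v x => (~~ F v x)%:R)) (Exp_prod (fun v x => (~~ G v x)%:R)).
rewrite -big_split; apply: ler_prod => v _.
exact: disjoint_compl_neg_corr (call_prob_ge0 v) (sum_call_prob v) (disjFG v).
Qed.

Definition informs (P : protocol) (S : {set V}) (u v : V) (x : V * bool) : bool :=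
  let push := [&& v \in S, adj v u, x.1 == u & x.2] in
  let pull := [&& v == u, adj u x.1, x.1 \in S & x.2] in
  match P with Push => push | Pull => pull | PushPull => pull || push end.

Lemma mem_next_informed (P : protocol) (S : {set V}) (w : outcome) (u : V) :
  u \in S -> u \in next_informed V adj P S w.
Proof. by move=> uS; case: P; rewrite /= inE uS. Qed.

Lemma next_informedE (P : protocol) (S : {set V}) (w : outcome) (u : V) :
  u \notin S ->
  (u \in next_informed V adj P S w) = [exists v, informs P S u v (w.1 v, w.2 v)].
Proof.
case: w => c b uNS /=.
have pullE : [&& adj u (c u), c u \in S & b u] =
    [exists v, [&& v == u, adj u (c v), c v \in S & b v]].
  apply/idP/existsP => [pull_u | [v /and4P [/eqP -> adj_uv cS bv]]].
    by exists u; rewrite eqxx.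
  by rewrite adj_uv cS bv.
case: P; rewrite /= !inE (negPf uNS) /=.
- by [].
- exact: pullE.
- rewrite pullE; apply/orP/existsP => [[] /existsP [v h] | [v /orP [] h]].
  + by exists v; rewrite h.
  + by exists v; rewrite h orbT.
  + by left; apply/existsP; exists v.
  + by right; apply/existsP; exists v.
Qed.

Lemma informs_disjoint (P : protocol) (S : {set V}) (u u' v : V) (x : V * bool) :
  u \notin S -> u' \notin S -> u != u' ->
  ~~ (informs P S u v x && informs P S u' v x).
Proof.
move=> uNS u'NS /negPf neq_uu'; apply/negP; case: x => a b.
case: P => /=.
- case/andP => /and4P [_ _ /eqP au _] /and4P [_ _ /eqP au' _].
  by rewrite -au -au' eqxx in neq_uu'.
- case/andP => /and4P [/eqP vu _ _ _] /and4P [/eqP vu' _ _ _].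
  by rewrite -vu -vu' eqxx in neq_uu'.
- case/andP => /orP [] /and4P [vu _ au _] /orP [] /and4P [vu' _ au' _].
  + by move: vu vu' => /eqP vu /eqP vu'; rewrite -vu -vu' eqxx in neq_uu'.
  + by move: vu => /eqP vu; rewrite vu (negPf uNS) in vu'.
  + by move: vu' => /eqP vu'; rewrite vu' (negPf u'NS) in vu.
  + by move: au au' => /eqP au /eqP au'; rewrite -au -au' eqxx in neq_uu'.
Qed.

Lemma Cov_informed_le0 (P : protocol) (S : {set V}) (u u' : V) : u != u' ->
  Cov (fun w => (u \in next_informed V adj P S w)%:R)
      (fun w => (u' \in next_informed V adj P S w)%:R) <= 0.
Proof.
move=> neq_uu'; pose Z v w : R := (v \in next_informed V adj P S w)%:R.
have Z_in v : v \in S -> Z v =1 fun=> 1.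
  by move=> vS w; rewrite /Z mem_next_informed.
have Z_notin v : v \notin S ->
    Z v =1 fun w => 1 - \prod_x (~~ informs P S v x (w.1 x, w.2 x))%:R.
  by move=> vNS w; rewrite /Z next_informedE // natr_exists.
have [uS | uNS] := boolP (u \in S).
  by rewrite (eq_Cov (Z_in u uS) (frefl _)) Cov_cstl.
have [u'S | u'NS] := boolP (u' \in S).
  by rewrite (eq_Cov (frefl _) (Z_in u' u'S)) Cov_cstr.
rewrite (eq_Cov (Z_notin u uNS) (Z_notin u' u'NS)) Cov_compl.
by apply: disjoint_calls_Cov_le0 => v x; apply: informs_disjoint.
Qed.

End OneRound.

Theorem lemma2p1 (R : realFieldType) (V : finType) (adj : rel V)
    (adj_sym : symmetric adj) (adj_irr : irreflexive adj)
    (q : R) (hq0 : 0 < q) (hq1 : q <= 1)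
    (P : protocol) (S : {set V}) :
  Var R V adj q (next_count R V adj P S) <= Exp R V adj q (next_count R V adj P S).
Proof.
apply: (Var_le_Exp_sum_indicators R V adj q V (fun u w => u \in next_informed V adj P S w)).
  by move=> w; rewrite /next_count natr_card.
by move=> u u'; apply: (Cov_informed_le0 _ _ _ _ (ltW hq0) hq1).
Qed.
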